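(* Let $F:\mathbb{R}^d\to\mathbb{R}^d$ be $L$-Lipschitz, let $x^*$ satisfy $F(x^* )=0$, and suppose $F$ satisfies the weak Minty condition with parameter $0<\rho<\frac1{2L}$. Consider the deterministic past extragradient method: given $x_0$, $\hat x_{-1}=x_0$, and for $k\ge0$, $\hat x_k=x_k-\gamma F(\hat x_{k-1})$, $x_{k+1}=x_k-\omega F(\hat x_k)$, with $$\max\Big\{2\rho,\frac1{2L}\Big\}<\gamma<\frac1L,\qquad 0<\omega<\min\Big\{\gamma-2\rho,\frac1{4L}-\frac\gamma4\Big\}.$$ Then for all $K\ge2$, $$\min_{0\le k\le K-1}\|F(\hat x_k)\|^2\le\frac{C\|x_0-x^*\|^2}{K-1},\qquad C=\frac{48}{\omega\gamma(1-L(\gamma+4\omega))}.$$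
   Context: $L$-Lipschitz: $\|F(x)-F(y)\|\le L\|x-y\|$. Weak Minty condition with parameter $\rho>0$: $\langle F(x),x-x^*\rangle\ge-\rho\|F(x)\|^2$ for all $x$. (This is the deterministic case $\delta=0$, $\sigma_*^2=0$ of stochastic past extragradient.) *)

From mathcomp Require Import all_boot all_order all_algebra.
From mathcomp Require Import reals.
Set Implicit Arguments. Unset Strict Implicit. Unset Printing Implicit Defensive.
Import Order.TTheory GRing.Theory Num.Theory.
Local Open Scope ring_scope.

Definition dotv (R : realType) (d : nat) (u v : 'rV[R]_d) : R :=
  \sum_(i < d) u 0 i * v 0 i.
Definition enorm (R : realType) (d : nat) (v : 'rV[R]_d) : R :=
  Num.sqrt (dotv v v).

Definition lipschitz (R : realType) (d : nat) (L : R) (F : 'rV[R]_d -> 'rV[R]_d) :=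
  forall x y, enorm (F x - F y) <= L * enorm (x - y).

Definition weak_minty (R : realType) (d : nat) (rho : R)
  (F : 'rV[R]_d -> 'rV[R]_d) (xs : 'rV[R]_d) :=
  forall x, dotv (F x) (x - xs) >= - rho * (enorm (F x)) ^+ 2.

(* Deterministic past extragradient: pe_iter k = (x_k, xhat_{k-1}),
   with xhat_{-1} = x_0;  xhat_k = x_k - gamma F(xhat_{k-1}),
   x_{k+1} = x_k - omega F(xhat_k). *)
Fixpoint pe_iter (R : realType) (d : nat) (F : 'rV[R]_d -> 'rV[R]_d)
  (gamma omega : R) (x0 : 'rV[R]_d) (k : nat) : 'rV[R]_d * 'rV[R]_d :=
  match k with
  | 0 => (x0, x0)
  | k'.+1 =>
      let (xk, xhprev) := pe_iter F gamma omega x0 k' in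
      let xhk := xk - gamma *: F xhprev in
      (xk - omega *: F xhk, xhk)
  end.

Definition pe_x (R : realType) (d : nat) (F : 'rV[R]_d -> 'rV[R]_d)
  (gamma omega : R) (x0 : 'rV[R]_d) (k : nat) : 'rV[R]_d :=
  (pe_iter F gamma omega x0 k).1.

Definition pe_xhat (R : realType) (d : nat) (F : 'rV[R]_d -> 'rV[R]_d)
  (gamma omega : R) (x0 : 'rV[R]_d) (k : nat) : 'rV[R]_d :=
  let p := pe_iter F gamma omega x0 k in p.1 - gamma *: F p.2.

From mathcomp Require Import all_boot all_order all_algebra.
From mathcomp Require Import reals.
From mathcomp Require Import ring lra.
Import Order.TTheory GRing.Theory Num.Theory.
Local Open Scope ring_scope.
Set Implicit Arguments. Unset Strict Implicit.

(* Write q = L gamma, r = L omega / (1 - q), A_k = |x_k - x*|^2, G_k = |F(xhat_k)|^2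
   and D_k = |F(xhat_k) - F(xhat_{k-1})|^2.  The weak Minty condition at xhat_k gives
   the descent A_{k+1} <= A_k - omega gamma |F(xhat_{k-1})|^2 + omega gamma D_k, and
   Lipschitz continuity gives D_{k+1} <= (1 - q) r^2 G_k + q D_k.  Hence the Lyapunov
   function Phi_k = A_{k+1} + (omega gamma q / (1 - q)) D_k decreases by at least
   omega gamma (1 - r^2) G_k per step, and Phi_0 <= (1 + q^3 r) A_0.  Telescoping over
   K - 1 steps bounds the mean, hence the minimum, of G_0, ..., G_{K-2}. *)

Section Averaging.
Variable R : realFieldType.

Lemma telescope_sum_le (Phi G : nat -> R) (c : R) :
  (forall n, Phi n.+1 + c * G n <= Phi n) ->
  forall m, c * \sum_(k < m) G k <= Phi 0%N - Phi m.
Proof.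
move=> Phi_dec m; rewrite mulr_sumr -opprB -(telescope_sumr Phi (leq0n m)) -sumrN.
by rewrite big_mkord; apply: ler_sum => k _; have := Phi_dec k; lra.
Qed.

Lemma exists_le_mean (f : nat -> R) (S : R) (n : nat) : (0 < n)%N ->
  \sum_(k < n) f k <= S -> exists2 k, (k < n)%N & f k <= S / n%:R.
Proof.
move=> n_gt0 sum_le; case: (pickP (fun k : 'I_n => f k <= S / n%:R)) => [k fk|all_gt].
  by exists k.
suff : S < \sum_(k < n) f k by rewrite ltNge sum_le.
have -> : S = \sum_(k < n) (S / n%:R).
  by rewrite sumr_const card_ord -[_ *+ n]mulr_natr divfK // pnatr_eq0 -lt0n.
apply: ltr_sum => [|k _]; first by apply/hasP; exists (Ordinal n_gt0); rewrite ?mem_index_enum.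
by rewrite ltNge all_gt.
Qed.

End Averaging.

Section EuclideanDot.
Variables (R : realType) (d : nat).
Implicit Types (u v w : 'rV[R]_d) (a : R).

Lemma dotvC u v : dotv u v = dotv v u.
Proof. by apply: eq_bigr => i _; rewrite mulrC. Qed.

Lemma dotvDl u v w : dotv (u + v) w = dotv u w + dotv v w.
Proof. by rewrite /dotv -big_split; apply: eq_bigr => i _; rewrite mxE mulrDl. Qed.

Lemma dotvNl u w : dotv (- u) w = - dotv u w.
Proof. by rewrite /dotv -sumrN; apply: eq_bigr => i _; rewrite mxE mulNr. Qed.

Lemma dotvZl a u w : dotv (a *: u) w = a * dotv u w.
Proof. by rewrite /dotv mulr_sumr; apply: eq_bigr => i _; rewrite mxE mulrA. Qed.

Lemma dotvDr u v w : dotv w (u + v) = dotv w u + dotv w v.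
Proof. by rewrite dotvC dotvDl !(dotvC w). Qed.

Lemma dotvNr u w : dotv w (- u) = - dotv w u.
Proof. by rewrite dotvC dotvNl dotvC. Qed.

Lemma dotvZr a u w : dotv w (a *: u) = a * dotv w u.
Proof. by rewrite dotvC dotvZl dotvC. Qed.

Definition dotvE := (dotvDl, dotvDr, dotvNl, dotvNr, dotvZl, dotvZr).

Lemma dotvv_ge0 u : 0 <= dotv u u.
Proof. by apply: sumr_ge0 => i _; rewrite -expr2 sqr_ge0. Qed.

Lemma enorm_sqr u : enorm u ^+ 2 = dotv u u.
Proof. by rewrite /enorm sqr_sqrtr // dotvv_ge0. Qed.

Lemma lipschitz_dotv (L : R) (F : 'rV[R]_d -> 'rV[R]_d) : lipschitz L F ->
  forall x y, dotv (F x - F y) (F x - F y) <= L ^+ 2 * dotv (x - y) (x - y).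
Proof.
move=> F_lip x y; rewrite -!enorm_sqr -exprMn !expr2.
by apply: ler_pM; rewrite ?sqrtr_ge0 ?F_lip.
Qed.

Lemma dotv_add_convex (q : R) u v : 0 < q -> q < 1 ->
  dotv (u + v) (u + v) <= dotv u u / (1 - q) + dotv v v / q.
Proof.
move=> q_gt0 q_lt1; have onemq_gt0 : 0 < 1 - q by rewrite subr_gt0.
rewrite -subr_ge0.
have -> : dotv u u / (1 - q) + dotv v v / q - dotv (u + v) (u + v) =
    dotv (q *: u - (1 - q) *: v) (q *: u - (1 - q) *: v) / (q * (1 - q)).
  by rewrite !dotvE (dotvC v u); field; rewrite !gt_eqF.
by rewrite divr_ge0 ?dotvv_ge0 // mulr_ge0 // ltW.
Qed.

Lemma weak_minty_descent (rho gamma omega : R) u g h :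
  0 <= omega -> omega <= gamma - 2 * rho ->
  - rho * dotv g g <= dotv g (u - gamma *: h) ->
  dotv (u - omega *: g) (u - omega *: g) <=
    dotv u u - omega * gamma * dotv h h + omega * gamma * dotv (g - h) (g - h).
Proof.
move=> omega_ge0 omega_le minty.
have slack : 0 <= omega * ((gamma - 2 * rho - omega) * dotv g g).
  by rewrite mulr_ge0 // mulr_ge0 ?dotvv_ge0 // subr_ge0.
have := ler_wpM2l omega_ge0 minty.
rewrite !dotvE (dotvC u g) (dotvC h g) in slack *.
lra.
Qed.

End EuclideanDot.

Section PastExtragradient.
Variables (R : realType) (d : nat) (F : 'rV[R]_d -> 'rV[R]_d) (gamma omega : R)
  (x0 : 'rV[R]_d).
Local Notation x := (pe_x F gamma omega x0).
Local Notation xh := (pe_xhat F gamma omega x0).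

Definition pe_past_grad k := F (pe_iter F gamma omega x0 k).2.
Local Notation g := pe_past_grad.

Lemma pe_xhatE k : xh k = x k - gamma *: g k.
Proof. by []. Qed.

Lemma pe_xS k : x k.+1 = x k - omega *: F (xh k).
Proof. by rewrite /pe_x /pe_xhat /=; case: (pe_iter F gamma omega x0 k). Qed.

Lemma pe_past_gradS k : g k.+1 = F (xh k).
Proof. by rewrite /g /pe_xhat /=; case: (pe_iter F gamma omega x0 k). Qed.

Lemma pe_xhatS k : xh k.+1 - xh k = - omega *: F (xh k) - gamma *: (F (xh k) - g k).
Proof.
rewrite pe_xhatE pe_past_gradS pe_xS [xh k in RHS]pe_xhatE.
by apply/rowP => i; rewrite !mxE; ring.
Qed.

Variables (L rho : R) (xs : 'rV[R]_d).
Hypothesis F_lip : lipschitz L F.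
Hypothesis F_xs : F xs = 0.
Hypothesis F_minty : weak_minty rho F xs.
Hypothesis omega_gt0 : 0 < omega.
Hypothesis omega_le : omega <= gamma - 2 * rho.
Hypothesis L_gt0 : 0 < L.
Hypothesis gamma_gt0 : 0 < gamma.
Hypothesis Lgamma_lt1 : L * gamma < 1.

Let q := L * gamma.
Let r := L * omega / (1 - q).
Let A k := dotv (x k - xs) (x k - xs).
Let G k := dotv (F (xh k)) (F (xh k)).
Let D k := dotv (F (xh k) - g k) (F (xh k) - g k).
Let P k := dotv (g k) (g k).

Let q_gt0 : 0 < q. Proof. by rewrite mulr_gt0. Qed.
Let onemq_gt0 : 0 < 1 - q. Proof. by rewrite subr_gt0. Qed.
Let r_gt0 : 0 < r. Proof. by rewrite divr_gt0 ?mulr_gt0. Qed.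

Lemma pe_dist_descent k : A k.+1 <= A k - omega * gamma * P k + omega * gamma * D k.
Proof.
rewrite /A /P /D pe_xS addrAC; apply: (weak_minty_descent (ltW omega_gt0) omega_le).
by have := F_minty (xh k); rewrite enorm_sqr pe_xhatE addrAC.
Qed.

Lemma pe_gap_contract k : D k.+1 <= (1 - q) * r ^+ 2 * G k + q * D k.
Proof.
rewrite /D pe_past_gradS; apply: le_trans (lipschitz_dotv F_lip _ _) _.
rewrite pe_xhatS; apply: le_trans (ler_wpM2l (sqr_ge0 L) (dotv_add_convex _ _ q_gt0 Lgamma_lt1)) _.
rewrite !dotvE -/(G k) -/(D k) /r /q le_eqVlt; apply/orP; left; apply/eqP.
by field; rewrite !gt_eqF.
Qed.

Lemma pe_gap0 : D 0 <= q ^+ 2 * P 0.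
Proof.
rewrite /D /P; apply: le_trans (lipschitz_dotv F_lip _ _) _.
rewrite [xh 0]pe_xhatE addrAC subrr add0r !dotvE /q le_eqVlt; apply/orP; left.
by apply/eqP; ring.
Qed.

Lemma pe_past_grad0 : P 0 <= L ^+ 2 * A 0.
Proof. by have := lipschitz_dotv F_lip x0 xs; rewrite F_xs subr0. Qed.

Let c := omega * gamma * q / (1 - q).
Let Phi n := A n.+1 + c * D n.

Let weight_gt0 : 0 < omega * gamma + c.
Proof. by rewrite addr_gt0 ?divr_gt0 ?mulr_gt0. Qed.

Lemma pe_lyapunov_init : Phi 0 <= (1 + q ^+ 3 * r) * A 0.
Proof.
have descent := pe_dist_descent 0.
have gap := ler_wpM2l (ltW weight_gt0) pe_gap0.
have past := ler_wpM2l (mulr_ge0 (ltW weight_gt0) (sqr_ge0 q)) pe_past_grad0.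
have -> : (1 + q ^+ 3 * r) * A 0 = A 0 + (omega * gamma + c) * q ^+ 2 * (L ^+ 2 * A 0).
  by rewrite /c /r /q; field; rewrite gt_eqF.
have : 0 <= omega * gamma * P 0 by rewrite !mulr_ge0 ?dotvv_ge0 // ltW.
rewrite /Phi; lra.
Qed.

Lemma pe_lyapunov_dec n : Phi n.+1 + omega * gamma * (1 - r ^+ 2) * G n <= Phi n.
Proof.
have descent := pe_dist_descent n.+1.
rewrite /P pe_past_gradS -/(G n) in descent.
have gap : (omega * gamma + c) * D n.+1 <= omega * gamma * r ^+ 2 * G n + c * D n.
  have -> : omega * gamma * r ^+ 2 * G n + c * D n =
      (omega * gamma + c) * ((1 - q) * r ^+ 2 * G n + q * D n).
    by rewrite /c; field; rewrite gt_eqF.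
  by apply: ler_wpM2l; [exact: ltW weight_gt0 | exact: pe_gap_contract].
rewrite /Phi; lra.
Qed.

Hypothesis omega_small : 4 * (L * omega) < 1 - L * gamma.

Let r_lt : 4 * r < 1.
Proof. by rewrite /r mulrA ltr_pdivrMr // mul1r. Qed.

Lemma pe_rate_constant :
  1 + q ^+ 3 * r <= omega * gamma * (1 - r ^+ 2) *
    (48 / (omega * gamma * (1 - L * (gamma + 4 * omega)))).
Proof.
have q3r_le : q ^+ 3 * r <= r.
  exact: ler_piMl (ltW r_gt0) (exprn_ile1 3 (ltW q_gt0) (ltW Lgamma_lt1)).
have -> : 1 - L * (gamma + 4 * omega) = (1 - q) * (1 - 4 * r).
  by rewrite /r /q; field; rewrite gt_eqF.
have -> : omega * gamma * (1 - r ^+ 2) * (48 / (omega * gamma * ((1 - q) * (1 - 4 * r)))) =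
    48 * (1 - r ^+ 2) / ((1 - q) * (1 - 4 * r)).
  by field; rewrite !gt_eqF ?mulr_gt0 ?subr_gt0.
rewrite ler_pdivlMr ?mulr_gt0 ?subr_gt0 //.
apply: (@le_trans _ _ (1 + q ^+ 3 * r)).
  apply: ler_piMr; first by rewrite addr_ge0 // mulr_ge0 ?exprn_ge0 ?ltW.
  have : 0 < (1 - q) * r by rewrite mulr_gt0.
  by move: q_gt0 onemq_gt0 r_lt; lra.
have : r ^+ 2 <= r by rewrite expr2 ler_piMl ?ltW //; move: r_lt; lra.
by move: r_lt; lra.
Qed.

Theorem pe_min_grad_sqr_le n : (0 < n)%N ->
  exists2 k, (k < n)%N & enorm (F (xh k)) ^+ 2 <=
    48 / (omega * gamma * (1 - L * (gamma + 4 * omega))) * enorm (x0 - xs) ^+ 2 / n%:R.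
Proof.
move=> n_gt0; set C := 48 / _.
have rate_gt0 : 0 < omega * gamma * (1 - r ^+ 2) by rewrite !mulr_gt0 // subr_gt0 expr2; move: r_gt0 r_lt; nra.
have Phi_ge0 : 0 <= Phi n.
  by rewrite addr_ge0 ?dotvv_ge0 // mulr_ge0 ?dotvv_ge0 // divr_ge0 ?mulr_ge0 ?ltW.
have sum_le : \sum_(k < n) G k <= C * A 0.
  rewrite -(ler_pM2l rate_gt0) mulrA.
  apply: le_trans (telescope_sum_le pe_lyapunov_dec n) _.
  apply: le_trans (ler_wpM2r (dotvv_ge0 _) pe_rate_constant).
  by have := pe_lyapunov_init; rewrite -/(A 0); lra.
have [k k_lt Gk] := exists_le_mean n_gt0 sum_le.
by exists k; rewrite // !enorm_sqr.
Qed.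

End PastExtragradient.

Theorem corollary4p6 (R : realType) (d : nat) (F : 'rV[R]_d -> 'rV[R]_d)
  (L rho gamma omega : R) (xs x0 : 'rV[R]_d) :
  0 < L ->
  lipschitz L F ->
  F xs = 0 ->
  weak_minty rho F xs ->
  0 < rho -> rho < 1 / (2 * L) ->
  Num.max (2 * rho) (1 / (2 * L)) < gamma -> gamma < 1 / L ->
  0 < omega -> omega < Num.min (gamma - 2 * rho) (1 / (4 * L) - gamma / 4) ->
  forall K : nat, (2 <= K)%N ->
  exists k : nat, (k <= K - 1)%N /\
    (enorm (F (pe_xhat F gamma omega x0 k))) ^+ 2 <=
      (48 / (omega * gamma * (1 - L * (gamma + 4 * omega))))
        * (enorm (x0 - xs)) ^+ 2 / (K - 1)%:R.
Proof.
move=> L_gt0 F_lip F_xs F_minty rho_gt0 _ gamma_gt gamma_lt omega_gt0 omega_lt K K_ge2.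
move: gamma_gt; rewrite gt_max => /andP[rho_lt _].
move: omega_lt; rewrite lt_min => /andP[omega_lt1 omega_lt2].
have gamma_gt0 : 0 < gamma by lra.
have Lgamma_lt1 : L * gamma < 1 by move: gamma_lt; rewrite ltr_pdivlMr // mulrC.
have omega_small : 4 * (L * omega) < 1 - L * gamma.
  have : (omega + gamma / 4) * (4 * L) < 1 by rewrite -ltr_pdivlMr ?mulr_gt0 //; lra.
  have -> : (omega + gamma / 4) * (4 * L) = 4 * (L * omega) + L * gamma by field.
  lra.
have [|k k_lt bound] := pe_min_grad_sqr_le x0 F_lip F_xs F_minty omega_gt0
  (ltW omega_lt1) L_gt0 gamma_gt0 Lgamma_lt1 omega_small (n := (K - 1)%N).
  by rewrite subn_gt0.
by exists k; split; first exact: ltnW.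
Qed.
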